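(* Let $G$ be a cubic graph. If $G=G_1\,H\,G_2$ or $G=G_1\,Y\,G_2$, then $G$ is bipartite if and only if $G_1$ and $G_2$ are both bipartite.
   Context: Graphs are finite; multiple edges allowed, loops not. For cubic graphs $G_1,G_2$: $G_1\,Y\,G_2$ is obtained by choosing a vertex $v_1\in G_1$ with neighbors (via its three incident edges) $s_{11},s_{12},s_{13}$ and a vertex $v_2\in G_2$ with neighbors $s_{21},s_{22},s_{23}$, deleting $v_1,v_2$, and adding edges $s_{1j}s_{2j}$ ($j=1,2,3$); equivalently, $G=G_1\,Y\,G_2$ means $G$ has a $3$-edge cut whose two sides, each completed by a new vertex joined to the three cut endpoints on that side, are $G_1$ and $G_2$. $G_1\,H\,G_2$ is obtained by choosing edges $s_{11}s_{12}\in G_1$ and $s_{21}s_{22}\in G_2$, deleting them and adding $s_{11}s_{21}$, $s_{12}s_{22}$; equivalently, $G$ has a $2$-edge cut whose two sides, each completed by an edge joining the two cut endpoints on that side, are $G_1$ and $G_2$. In the decomposition direction the cuts are nontrivial, i.e. $G_1$ and $G_2$ each have fewer vertices than $G$. *)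

From mathcomp Require Import ssreflect ssrfun ssrbool eqtype ssrnat seq choice fintype finset.
Set Implicit Arguments. Unset Strict Implicit. Unset Printing Implicit Defensive.

(* A finite multigraph without loops: each edge has two (distinct) ends.
   Parallel edges are allowed. The orientation src/tgt is only bookkeeping. *)
Record mgraph := MGraph {
  vtx : finType;
  edg : finType;
  src : edg -> vtx;
  tgt : edg -> vtx;
  loopless : forall e, src e != tgt e }.

Arguments src {m} e.
Arguments tgt {m} e.

Definition incident (G : mgraph) (e : edg G) (v : vtx G) : bool :=
  (src e == v) || (tgt e == v).

(* degree = number of incident edges (no loops, so each counted once) *)
Definition deg (G : mgraph) (v : vtx G) : nat := #|[set e | incident e v]|.

Definition cubic (G : mgraph) : Prop := forall v : vtx G, deg v = 3.

Definition bipartite (G : mgraph) : Prop :=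
  exists c : vtx G -> bool, forall e : edg G, c (src e) != c (tgt e).

Definition mg_iso (G G' : mgraph) : Prop :=
  exists (fv : vtx G -> vtx G') (fe : edg G -> edg G'),
    [/\ bijective fv, bijective fe &
        forall e, ((src (fe e) == fv (src e)) && (tgt (fe e) == fv (tgt e)))
               || ((src (fe e) == fv (tgt e)) && (tgt (fe e) == fv (src e)))].

(* Delete e1 = s11 s12 from G1 and e2 = s21 s22 from G2, add s11 s21, s12 s22.
   Here s11 = src e1, s12 = tgt e1; (s21, s22) = (src e2, tgt e2) if b = false
   and (tgt e2, src e2) if b = true. *)
Section HOp.
Variables (G1 G2 : mgraph) (e1 : edg G1) (e2 : edg G2) (b : bool).

Definition H_vtx : finType := (vtx G1 + vtx G2)%type.
Definition H_edg : finType :=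
  ({e : edg G1 | e != e1} + {e : edg G2 | e != e2} + bool)%type.

Definition s21 : vtx G2 := if b then tgt e2 else src e2.
Definition s22 : vtx G2 := if b then src e2 else tgt e2.

Definition H_src (e : H_edg) : H_vtx :=
  match e with
  | inl (inl e) => inl (src (val e))
  | inl (inr e) => inr (src (val e))
  | inr false => inl (src e1)
  | inr true => inl (tgt e1)
  end.
Definition H_tgt (e : H_edg) : H_vtx :=
  match e with
  | inl (inl e) => inl (tgt (val e))
  | inl (inr e) => inr (tgt (val e))
  | inr false => inr s21
  | inr true => inr s22
  end.

Lemma H_loopless e : H_src e != H_tgt e.
Proof.
case: e => [[e|e]|[]] //=; apply/eqP => -[]; apply/eqP; exact: loopless.
Qed.

Definition Hop : mgraph := @MGraph H_vtx H_edg H_src H_tgt H_loopless.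
End HOp.

Definition other (G : mgraph) (e : edg G) (v : vtx G) : vtx G :=
  if src e == v then tgt e else src e.

Lemma other_ne (G : mgraph) (e : edg G) (v : vtx G) :
  incident e v -> other e v != v.
Proof.
rewrite /incident /other; case: eqP => [<- _|ne /= /eqP Ht].
  by rewrite eq_sym loopless.
by apply/eqP.
Qed.

Lemma src_ne (G : mgraph) (e : edg G) (v : vtx G) : ~~ incident e v -> src e != v.
Proof. by rewrite /incident negb_or => /andP []. Qed.
Lemma tgt_ne (G : mgraph) (e : edg G) (v : vtx G) : ~~ incident e v -> tgt e != v.
Proof. by rewrite /incident negb_or => /andP []. Qed.

(* Delete v1 (with incident edges f1 0, f1 1, f1 2, so s1j = other (f1 j) v1)
   and v2 (likewise), and add the edges s1j s2j for j < 3. *)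
Section YOp.
Variables (G1 G2 : mgraph) (v1 : vtx G1) (v2 : vtx G2)
  (f1 : 'I_3 -> edg G1) (hf1 : forall j, incident (f1 j) v1)
  (f2 : 'I_3 -> edg G2) (hf2 : forall j, incident (f2 j) v2).

Definition Y_vtx : finType := ({x : vtx G1 | x != v1} + {x : vtx G2 | x != v2})%type.
Definition Y_edg : finType :=
  ({e : edg G1 | ~~ incident e v1} + {e : edg G2 | ~~ incident e v2} + 'I_3)%type.

Definition Y_src (e : Y_edg) : Y_vtx :=
  match e with
  | inl (inl e) => inl (exist _ (src (val e)) (src_ne (valP e)))
  | inl (inr e) => inr (exist _ (src (val e)) (src_ne (valP e)))
  | inr j => inl (exist _ (other (f1 j) v1) (other_ne (hf1 j)))
  end.
Definition Y_tgt (e : Y_edg) : Y_vtx :=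
  match e with
  | inl (inl e) => inl (exist _ (tgt (val e)) (tgt_ne (valP e)))
  | inl (inr e) => inr (exist _ (tgt (val e)) (tgt_ne (valP e)))
  | inr j => inr (exist _ (other (f2 j) v2) (other_ne (hf2 j)))
  end.

Lemma Y_loopless e : Y_src e != Y_tgt e.
Proof.
case: e => [[e|e]|j] //=; apply/eqP => -[]; apply/eqP; exact: loopless.
Qed.

Definition Yop : mgraph := @MGraph Y_vtx Y_edg Y_src Y_tgt Y_loopless.
End YOp.

Definition is_H (G G1 G2 : mgraph) : Prop :=
  exists (e1 : edg G1) (e2 : edg G2) (b : bool), mg_iso G (Hop e1 e2 b).

(* G = G1 Y G2 : f1 lists the three (distinct) edges at v1, f2 those at v2 *)
Definition is_Y (G G1 G2 : mgraph) : Prop :=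
  exists (v1 : vtx G1) (v2 : vtx G2)
         (f1 : 'I_3 -> edg G1) (hf1 : forall j, incident (f1 j) v1)
         (f2 : 'I_3 -> edg G2) (hf2 : forall j, incident (f2 j) v2),
    [/\ injective f1, injective f2 & mg_iso G (Yop hf1 hf2)].

From mathcomp Require Import ssreflect ssrfun ssrbool eqtype ssrnat fintype.
From mathcomp Require Import all_boot zify.
Set Implicit Arguments. Unset Strict Implicit.

(* Restricting a proper 2-colouring of G to one side of the cut leaves at most
   two monochromatic edges on that side (only the deleted edge for H; only
   edges at the deleted vertex, minus one, for Y), and they all have the same
   colour class b.  In an r-regular graph, counting edge ends in each colour
   class gives r|B| = P + 2 M_b and r|W| = P, so r divides 2 M_b; for odd r
   and M_b < r this forces M_b = 0.  Conversely, proper colourings of G1 and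
   G2 glue across the cut after possibly swapping the colours of G2, because
   the endpoints of the cut on each side are coloured alike (Y) or form a
   bichromatic edge (H). *)

Definition regular (G : mgraph) (r : nat) : Prop := forall v : vtx G, deg v = r.

Definition proper_coloring (G : mgraph) (c : vtx G -> bool) : Prop :=
  forall e : edg G, c (src e) != c (tgt e).

Lemma sum_eq_indicator (T : finType) (A : pred T) (s : T) :
  \sum_(v | A v) ((s == v) : nat) = A s.
Proof.
rewrite big_mkcond /= (bigD1 s) //= eqxx big1 ?addn0; first by case: (A s).
by move=> v; rewrite eq_sym => /negbTE ->; case: (A v).
Qed.

Lemma sum_deg_in (G : mgraph) (A : pred (vtx G)) :
  \sum_(v | A v) deg v = \sum_(e : edg G) (A (src e) + A (tgt e)).
Proof.
have -> : \sum_(v | A v) deg v = \sum_(v | A v) \sum_(e : edg G) (incident e v : nat).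
  apply: eq_bigr => v _; rewrite /deg -sum1_card big_mkcond /=.
  by apply: eq_bigr => e _; rewrite inE; case: (incident e v).
rewrite exchange_big /=; apply: eq_bigr => e _.
rewrite -!sum_eq_indicator -big_split /=; apply: eq_bigr => v _.
rewrite /incident; have := loopless e.
by case: (src e =P v) => [->|_]; case: (tgt e =P v) => [->|_] //=; rewrite eqxx.
Qed.

Lemma regular_color_class (G : mgraph) (r : nat) (c : vtx G -> bool) (b : bool) :
  regular G r ->
  #|[pred v | c v == b]| * r =
    \sum_(e : edg G) (c (src e) != c (tgt e))
    + 2 * \sum_(e : edg G) ((c (src e) == b) && (c (tgt e) == b)).
Proof.
move=> regG; rewrite -sum_nat_const (eq_bigr (@deg G)) => [|v _]; last by rewrite regG.
rewrite sum_deg_in big_distrr -big_split /=; apply: eq_bigr => e _.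
by rewrite !inE; case: b; case: (c (src e)); case: (c (tgt e)).
Qed.

Lemma odd_dvdn_double_small (r m d : nat) :
  odd r -> m < r -> 2 * m = r * d -> m = 0.
Proof.
move=> odd_r lt_mr; case: d => [|[|d]]; [lia | | lia].
by rewrite muln1 => def_r; move: odd_r; rewrite -def_r mul2n odd_double.
Qed.

Lemma regular_coloring_proper (G : mgraph) (r : nat) (c : vtx G -> bool)
    (b : bool) (S : {set edg G}) :
  odd r -> regular G r -> #|S| < r ->
  (forall e, c (src e) = c (tgt e) -> e \in S /\ c (src e) = b) ->
  proper_coloring c.
Proof.
move=> odd_r regG ltSr monoS.
set M := fun b' => \sum_(e : edg G) ((c (src e) == b') && (c (tgt e) == b')).
have monoSb e : (c (src e) == b) && (c (tgt e) == b) -> e \in S.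
  by case/andP => /eqP srcb /eqP tgtb; apply: (monoS e _).1; rewrite srcb tgtb.
have Mb_le : M b <= #|S|.
  rewrite -sum1_card [X in _ <= X]big_mkcond; apply: leq_sum => e _.
  by case: (boolP (_ && _)) => // /monoSb ->.
have Mnb0 : M (~~ b) = 0.
  apply/eqP; rewrite sum_nat_eq0; apply/forallP => e; apply/implyP => _.
  case: (boolP (_ && _)) => // /andP [/eqP srcnb /eqP tgtnb].
  by have [_] := monoS e (etrans srcnb (esym tgtnb)); rewrite srcnb; case: (b).
have Mb0 : M b = 0.
  have := regular_color_class c b regG; have := regular_color_class c (~~ b) regG.
  rewrite -/(M b) -/(M (~~ b)) Mnb0 muln0 addn0 => <-.
  move=> /(congr1 (subn^~ (#|[pred v | c v == ~~ b]| * r))); rewrite addKn -mulnBl.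
  by rewrite mulnC => /esym; apply: odd_dvdn_double_small; last exact: leq_ltn_trans ltSr.
move=> e; apply/negP => /eqP mono_e; have [_ srcb] := monoS e mono_e.
move/eqP: Mb0; rewrite sum_nat_eq0 => /forallP /(_ e).
by rewrite -mono_e srcb eqxx.
Qed.

Lemma proper_off_edge (G : mgraph) (r : nat) (c : vtx G -> bool) (e0 : edg G) :
  odd r -> 1 < r -> regular G r ->
  (forall e, e != e0 -> c (src e) != c (tgt e)) -> proper_coloring c.
Proof.
move=> odd_r gt1r regG proper_e0.
apply: (regular_coloring_proper (b := c (src e0)) (S := [set e0]) odd_r regG).
  by rewrite cards1.
move=> e mono_e; have -> : e = e0.
  by apply/eqP/negPn/negP => /proper_e0; rewrite mono_e eqxx.
by rewrite set11.
Qed.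

Lemma color_other (G : mgraph) (c : vtx G -> bool) (e : edg G) (v : vtx G) :
  incident e v -> c (src e) != c (tgt e) -> c (other e v) = ~~ c v.
Proof.
rewrite /incident /other; case: (src e =P v) => [<- _|_ /= /eqP <-];
  by case: (c (src e)); case: (c (tgt e)).
Qed.

(* v gets the colour opposite to its neighbour along f; the monochromatic
   edges are then among the other r - 1 edges at v, all in the colour class
   of v. *)
Lemma proper_extend_vertex (G : mgraph) (r : nat) (v : vtx G) (f : edg G)
    (d : {x : vtx G | x != v} -> bool) :
  odd r -> regular G r -> incident f v ->
  (forall e (h : ~~ incident e v),
     d (exist _ (src e) (src_ne h)) != d (exist _ (tgt e) (tgt_ne h))) ->
  bipartite G.
Proof.
move=> odd_r regG fv proper_d.
pose u0 : {x : vtx G | x != v} := exist _ (other f v) (other_ne fv).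
pose c x := if x == v then ~~ d u0 else d (insubd u0 x).
have cv : c v = ~~ d u0 by rewrite /c eqxx.
have cx x (h : x != v) : c x = d (exist _ x h).
  by rewrite /c (negbTE h); congr d; apply: val_inj; rewrite val_insubd /= h.
have mono_at_v e : c (src e) = c (tgt e) -> incident e v.
  move=> mono_e; apply/negPn/negP => h; move/eqP: mono_e.
  by rewrite (cx _ (src_ne h)) (cx _ (tgt_ne h)) (negbTE (proper_d e h)).
exists c; apply: (regular_coloring_proper (b := c v) (S := [set e | incident e v] :\ f)
  odd_r regG).
  by move: (regG v); rewrite /deg (cardsD1 f) inE fv; lia.
move=> e mono_e; have ev := mono_at_v e mono_e; split.
  rewrite !inE ev andbT; apply/eqP => ef; move: mono_e; rewrite ef => mono_f.
  have : c (other f v) = c v.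
    by move: (fv) mono_f; rewrite /incident /other; case: (src f =P v) => [->|_ /= /eqP ->].
  by rewrite cv (cx _ (other_ne fv)) -/u0; case: (d u0).
by move: ev; rewrite /incident; case: (src e =P v) => [->|_] //= /eqP ev;
  rewrite mono_e ev.
Qed.

Lemma mg_iso_bipartite (G G' : mgraph) : mg_iso G G' -> bipartite G <-> bipartite G'.
Proof.
case=> fv [fe [[gv fgv gfv] [ge fge gfe] fvfe]]; split=> [[c proper_c]|[c proper_c]].
  exists (fun v => c (gv v)) => e'; rewrite -(gfe e').
  move: (fvfe (ge e')) (proper_c (ge e')).
  by case/orP => /andP [/eqP -> /eqP ->]; rewrite !fgv // eq_sym.
exists (fun v => c (fv v)) => e; move: (fvfe e) (proper_c (fe e)).
by case/orP => /andP [/eqP -> /eqP ->] //; rewrite eq_sym.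
Qed.

Lemma bipartite_Hop (G1 G2 : mgraph) (r : nat) (e1 : edg G1) (e2 : edg G2) (b : bool) :
  odd r -> 1 < r -> regular G1 r -> regular G2 r ->
  bipartite (Hop e1 e2 b) <-> bipartite G1 /\ bipartite G2.
Proof.
move=> odd_r gt1r reg1 reg2; split=> [[c proper_c]|[[c1 proper_c1] [c2 proper_c2]]].
  split; [exists (c \o inl) | exists (c \o inr)].
    by apply: (proper_off_edge (e0 := e1)) odd_r gt1r reg1 _ => e ne;
      exact: (proper_c (inl (inl (exist _ e ne)))).
  by apply: (proper_off_edge (e0 := e2)) odd_r gt1r reg2 _ => e ne;
    exact: (proper_c (inl (inr (exist _ e ne)))).
pose k := c1 (src e1) == c2 (s21 e2 b).
exists (fun v : H_vtx G1 G2 => match v with inl x => c1 x | inr y => c2 y (+) k end).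
case=> [[e|e]|[]] /=; first exact: proper_c1.
- by move: (proper_c2 (val e)); case: k; case: (c2 _); case: (c2 _).
all: rewrite /k /s22 /s21; clear k; move: (proper_c2 e2) (proper_c1 e1).
all: by case: b; case: (c1 _); case: (c1 _); case: (c2 _); case: (c2 _).
Qed.

Lemma bipartite_Yop (G1 G2 : mgraph) (r : nat) (v1 : vtx G1) (v2 : vtx G2)
    (f1 : 'I_3 -> edg G1) (hf1 : forall j, incident (f1 j) v1)
    (f2 : 'I_3 -> edg G2) (hf2 : forall j, incident (f2 j) v2) :
  odd r -> regular G1 r -> regular G2 r ->
  bipartite (Yop hf1 hf2) <-> bipartite G1 /\ bipartite G2.
Proof.
move=> odd_r reg1 reg2; split=> [[c proper_c]|[[c1 proper_c1] [c2 proper_c2]]].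
  split.
    apply: (proper_extend_vertex (d := c \o inl)) odd_r reg1 (hf1 ord0) _ => e h.
    move: (proper_c (inl (inl (exist _ e h)))) => /=.
    by rewrite (bool_irrelevance (src_ne _) (src_ne h)) (bool_irrelevance (tgt_ne _) (tgt_ne h)).
  apply: (proper_extend_vertex (d := c \o inr)) odd_r reg2 (hf2 ord0) _ => e h.
  move: (proper_c (inl (inr (exist _ e h)))) => /=.
  by rewrite (bool_irrelevance (src_ne _) (src_ne h)) (bool_irrelevance (tgt_ne _) (tgt_ne h)).
pose k := c1 v1 == c2 v2.
exists (fun v : Y_vtx v1 v2 => match v with inl x => c1 (val x) | inr y => c2 (val y) (+) k end).
case=> [[e|e]|j] /=; first exact: proper_c1.
  by move: (proper_c2 (val e)); case: k; case: (c2 _); case: (c2 _).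
rewrite (color_other (hf1 j) (proper_c1 _)) (color_other (hf2 j) (proper_c2 _)) /k.
by case: (c1 v1); case: (c2 v2).
Qed.

Theorem lemma2 (G G1 G2 : mgraph) :
  cubic G -> cubic G1 -> cubic G2 ->
  is_H G G1 G2 \/ is_Y G G1 G2 ->
  (bipartite G <-> bipartite G1 /\ bipartite G2).
Proof.
move=> _ cub1 cub2 [[e1 [e2 [b iso]]]|[v1 [v2 [f1 [hf1 [f2 [hf2 [_ _ iso]]]]]]]].
  by rewrite (mg_iso_bipartite iso); exact: (bipartite_Hop (r := 3)).
by rewrite (mg_iso_bipartite iso); exact: (bipartite_Yop (r := 3)).
Qed.
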